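(* For all odd $n\geqslant3$ and all even $n\geqslant8$, \[ \sum_{i=0}^{\lfloor\frac{n-1}{2}\rfloor}\binom{n}{i+1,\,n-2i-1,\,i}<\sum_{i=0}^{\lfloor\frac{n-1}{2}\rfloor}\binom{n}{i,\,n-2i,\,i}. \]
   Context: $\binom{n}{a,b,c}=\frac{n!}{a!\,b!\,c!}$ denotes the trinomial coefficient for nonnegative integers $a+b+c=n$. *)

From mathcomp Require Import all_boot.
Set Implicit Arguments. Unset Strict Implicit. Unset Printing Implicit Defensive.

(* Trinomial coefficient n!/(a! b! c!) for a + b + c = n (exact division then). *)
Definition trinom (n a b c : nat) : nat := n`! %/ (a`! * b`! * c`!).

From mathcomp Require Import all_boot zify.

(* The left-hand side is the entry T(n, 1) of the trinomial triangle and the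
   right-hand side is T(n, 0), minus the central binomial coefficient C(n, n/2)
   when n is even. The gap T(n, 0) - T(n, 1) is the Riordan number r_n, which
   counts paths; concatenation of paths makes r supermultiplicative, so r_n > 0
   for n <> 1, and since r_12 = 4213 > 4^6 while C(2m, m) at most quadruples
   when m grows by one, r_2m > C(2m, m) for m >= 4 follows from the six cases
   4 <= m < 10. *)

Set Implicit Arguments.
Unset Strict Implicit.
Unset Printing Implicit Defensive.

(* Unlike [trinom], this product of binomials vanishes when a + c > n. *)
Definition trin n a c := 'C(n, a) * 'C(n - a, c).

Lemma trin_small n a c : n < a + c -> trin n a c = 0.
Proof.
move=> h; rewrite /trin; case: (leqP a n) => ha; last by rewrite bin_small.
by rewrite [X in _ * X]bin_small ?muln0 //; lia.
Qed.

Lemma trin_fact n a c :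
  a + c <= n -> trin n a c * (a`! * c`! * (n - a - c)`!) = n`!.
Proof.
move=> h; have ha : a <= n by lia.
have hc : c <= n - a by lia.
by rewrite -(bin_fact ha) -(bin_fact hc) /trin; lia.
Qed.

Lemma trinC n a c : trin n a c = trin n c a.
Proof.
case: (leqP (a + c) n) => h; last by rewrite !trin_small // addnC.
have fact_pos : 0 < a`! * c`! * (n - a - c)`! by rewrite !muln_gt0 !fact_gt0.
apply/eqP; rewrite -(eqn_pmul2r fact_pos) trin_fact //.
by rewrite (mulnC a`!) subnAC trin_fact // addnC.
Qed.

Lemma trinomE n a b c : a + b + c = n -> trinom n a b c = trin n a c.
Proof.
move=> h; have hac : a + c <= n by lia.
rewrite /trinom -(trin_fact hac) (_ : n - a - c = b); last by lia.
by rewrite mulnAC mulnK // !muln_gt0 !fact_gt0.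
Qed.

Lemma trinS n a c :
  trin n.+1 a c = trin n a c + (0 < a) * trin n a.-1 c + (0 < c) * trin n a c.-1.
Proof.
rewrite /trin; case: a => [|a] /=.
  rewrite !bin0 !mul1n !subn0.
  by case: c => [|c] /=; rewrite ?bin0 ?mul0n ?addn0 // binS mul1n.
rewrite subSS binS mul1n mulnDl.
case: (leqP n a) => ha; first by rewrite (@bin_small n a.+1) //; lia.
have -> : n - a = (n - a.+1).+1 by lia.
case: c => [|c] /=; first by rewrite !bin0 mul0n addn0 addnC.
by rewrite mul1n binS mulnDr; lia.
Qed.

(* [tri n k] is the coefficient of x^k in (1 + x + 1/x)^n. *)
Definition tri n k := \sum_(0 <= i < n.+1) trin n (k + i) i.

Lemma tri_trunc n k N : n < k + N.*2 -> tri n k = \sum_(0 <= i < N) trin n (k + i) i.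
Proof.
have drop_tail N1 N2 : n < k + N1.*2 -> N1 <= N2 ->
    \sum_(0 <= i < N2) trin n (k + i) i = \sum_(0 <= i < N1) trin n (k + i) i.
  move=> hN1 h12; rewrite (big_cat_nat _ h12) //= [X in _ + X]big_nat_cond.
  rewrite [X in _ + X]big1 ?addn0 //.
  by move=> i /andP[/andP[hi _] _]; apply: trin_small; lia.
move=> hN; case: (leqP N n.+1) => h; first exact: drop_tail.
by symmetry; apply: drop_tail => //; lia.
Qed.

Lemma triS n k : tri n.+1 k =
  tri n k + \sum_(0 <= i < n.+2) (0 < k + i) * trin n (k + i).-1 i + tri n k.+1.
Proof.
rewrite (@tri_trunc n k n.+2); last by lia.
have shift : \sum_(0 <= i < n.+1) trin n (k.+1 + i) i =
             \sum_(0 <= i < n.+2) (0 < i) * trin n (k + i) i.-1.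
  rewrite [in RHS]big_nat_recl //= mul0n add0n.
  by apply: eq_big_nat => i _; rewrite addnS mul1n.
rewrite /tri shift -!big_split; apply: eq_big_nat => i _.
by rewrite trinS.
Qed.

Lemma triSS n k : tri n.+1 k.+1 = tri n k + tri n k.+1 + tri n k.+2.
Proof.
rewrite triS [tri n k + _]addnC (@tri_trunc n k n.+2); last by lia.
by congr (_ + _ + _); apply: eq_big_nat => i _; rewrite mul1n.
Qed.

Lemma triS0 n : tri n.+1 0 = tri n 0 + 2 * tri n 1.
Proof.
rewrite triS big_nat_recl // mul0n add0n -addnA mul2n -addnn.
congr (_ + (_ + _)); apply: eq_big_nat => i _.
by rewrite mul1n trinC.
Qed.

(* [riordan n k] counts the paths of length n with steps -1, 0, 1 from height k
   to height 0 that stay nonnegative and take no level step at height 0. *)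
Fixpoint riordan n k :=
  if n is n'.+1 then
    if k is k'.+1 then riordan n' k' + riordan n' k + riordan n' k.+1
    else riordan n' 1
  else (k == 0 : nat).

Lemma tri_riordan n k : tri n k = tri n k.+1 + riordan n k.
Proof.
elim: n k => [|n IH] [|k] /=.
- by rewrite /tri !big_nat1.
- by rewrite /tri !big_nat1 /trin !bin0n.
- by rewrite triS0 triSS; have := IH 0; have := IH 1; lia.
- rewrite !triSS; have := IH k; have := IH k.+1.
  by have := IH k.+2; have := IH k.+3; lia.
Qed.

Lemma riordan_supermul a n k : riordan a 0 * riordan n k <= riordan (a + n) k.
Proof.
elim: n k => [|n IH] [|k]; rewrite ?addn0 ?addnS /=.
- by rewrite muln1.
- by rewrite muln0.
- exact: IH.
- by rewrite !mulnDr; do 2?apply: leq_add; apply: IH.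
Qed.

Lemma riordan_gt0 n : n != 1 -> 0 < riordan n 0.
Proof.
elim/ltn_ind: n => -[|[|[|[|n]]]] IH // _.
by apply: leq_trans (riordan_supermul 2 n.+2 0); rewrite mul1n; apply: IH.
Qed.

Lemma bin_double_succ m : 'C((m.+1).*2, m.+1) <= 4 * 'C(m.*2, m).
Proof.
have e1 : (m.+1).*2 * 'C(m.*2.+1, m) = m.+1 * 'C((m.+1).*2, m.+1) := mul_bin_diag _ _.
have e2 : m.*2.+1 * 'C(m.*2, m) = m.+1 * 'C(m.*2.+1, m.+1) := mul_bin_diag _ _.
have e3 : 'C(m.*2.+1, m.+1) = 'C(m.*2.+1, m).
  by rewrite -[RHS]bin_sub; [congr 'C(_, _); lia | lia].
rewrite -(@leq_pmul2l (m.+1 * m.+1)) // -mulnA -e1 mulnCA -e3 -e2 !mulnA.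
by apply: leq_mul => //; lia.
Qed.

Lemma bin_double_add m d : 'C((m + d).*2, m + d) <= 4 ^ d * 'C(m.*2, m).
Proof.
elim: d => [|d IH]; first by rewrite addn0 mul1n.
by rewrite addnS expnS -mulnA (leq_trans (bin_double_succ _)) // leq_pmul2l.
Qed.

Lemma bin_double_lt_riordan_small m : 4 <= m < 10 -> 'C(m.*2, m) < riordan m.*2 0.
Proof.
move=> hm; have [m_lt9 | ->] : m < 9 \/ m = 9 by lia.
  have small : all (fun m => 'C(m.*2, m) < riordan m.*2 0) (iota 4 5) by vm_compute.
  by apply: (allP small); rewrite mem_iota; lia.
by apply: (leq_trans _ (riordan_supermul 4 14 0)); vm_compute.
Qed.

Lemma bin_double_lt_riordan m : 4 <= m -> 'C(m.*2, m) < riordan m.*2 0.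
Proof.
elim/ltn_ind: m => m IH hm.
have [m_lt10 | m_ge10] := ltnP m 10.
  by apply: bin_double_lt_riordan_small; rewrite hm m_lt10.
have [j def_m] : exists j, m = j + 6 by exists (m - 6); lia.
subst m.
have lt_j : 'C(j.*2, j) < riordan j.*2 0 by apply: IH; lia.
have r12 : 4 ^ 6 <= riordan 12 0 by vm_compute.
apply: leq_ltn_trans (bin_double_add j 6) _.
apply: (@leq_trans (4 ^ 6 * riordan j.*2 0)); first by rewrite ltn_pmul2l.
rewrite (_ : (j + 6).*2 = 12 + j.*2); last by lia.
by apply: leq_trans (riordan_supermul 12 j.*2 0); rewrite leq_mul2r r12 orbT.
Qed.

Lemma sum_trinom_tri n k N (b : nat -> nat) :
  n < k + N.*2 -> (forall i, i < N -> k + i + b i + i = n) ->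
  \sum_(0 <= i < N) trinom n (k + i) (b i) i = tri n k.
Proof.
move=> hN hb; rewrite (tri_trunc hN); apply: eq_big_nat => i /andP[_ hi].
by rewrite trinomE ?hb.
Qed.

Lemma trinom_central m : trinom m.*2 m 0 m = 'C(m.*2, m).
Proof. by rewrite trinomE ?addn0 ?addnn // /trin -addnn addnK binn muln1. Qed.

Theorem lemma5p7 (n : nat) :
  (odd n && (3 <= n)) || (~~ odd n && (8 <= n)) ->
  \sum_(0 <= i < (n.-1)./2 .+1) trinom n i.+1 (n - i.*2 - 1) i <
  \sum_(0 <= i < (n.-1)./2 .+1) trinom n i (n - i.*2) i.
Proof.
have n_half := odd_double_half n; set m := (n.-1)./2.
move=> hn; rewrite (@sum_trinom_tri n 1 m.+1 (fun i => n - i.*2 - 1)); last 2 first.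
- by lia.
- by move=> i hi; lia.
case/orP: hn => /andP[n_odd n_ge].
- rewrite (@sum_trinom_tri n 0 m.+1 (fun i => n - i.*2)); last 2 first.
  + by lia.
  + by move=> i hi; lia.
  by rewrite [tri n 0]tri_riordan -addn1 leq_add2l riordan_gt0 //; lia.
have def_n : n = m.+1.*2 by lia.
have tri_n0 : \sum_(0 <= i < m.+1) trinom n i (n - i.*2) i + 'C(n, m.+1) = tri n 0.
  rewrite -(@sum_trinom_tri n 0 m.+2 (fun i => n - i.*2)); last 2 first.
  - by lia.
  - by move=> i hi; lia.
  by rewrite [in RHS]big_nat_recr //= def_n subnn trinom_central.
have := tri_riordan n 0; have := @bin_double_lt_riordan m.+1; rewrite -def_n; lia.
Qed.
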